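(* Let $E$ be an $r$-round block cipher with block size $n$, and let $F:\mathbb{F}_2^n\times\mathbb{F}_2^m\to\mathbb{F}_2^n$, $F(x,k)=F_k(x)$, be its reduced version consisting of the first $r-1$ rounds, where $k$ ranges over the key space $\mathcal{K}=\mathbb{F}_2^m$ of these rounds. Run Algorithm 2 (described in the context) on $F$ with a polynomial $q(n)$ and a constant $\sigma\in(0,1)$. If Algorithm 2 outputs a truncated differential $(a,b)$, then, except with probability negligible in $n$, there exists a subset $\mathcal{K}'\subseteq\mathcal{K}$ with $|\mathcal{K}'|/|\mathcal{K}|>1-\frac{1}{q(n)}$ such that for every $k\in\mathcal{K}'$, $$\frac{\big|\{x\in\mathbb{F}_2^n : F_k(x\oplus a)\oplus F_k(x)\text{ matches } b\}\big|}{2^n}>1-\sigma .$$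
   Context: Notation: $\oplus$ is bitwise XOR, $+$ is addition in $\mathbb{F}_2$, $u\cdot w$ is the standard inner product over $\mathbb{F}_2$. Write $F=(F_1,\dots,F_n)$ with component Boolean functions $F_j:\mathbb{F}_2^{n+m}\to\mathbb{F}_2$ (input $z=(x,k)$). Walsh spectrum: for $f:\mathbb{F}_2^N\to\mathbb{F}_2$, $S_f(\omega)=2^{-N}\sum_{x\in\mathbb{F}_2^N}(-1)^{f(x)+\omega\cdot x}$. Running the Bernstein–Vazirani (BV) algorithm on $f$ (implemented by the attacker's own quantum circuit) returns a vector $\omega\in\mathbb{F}_2^N$ with probability $S_f(\omega)^2$; distinct runs are independent. Truncated differential: a pair $(a,b)$ with $a\in\mathbb{F}_2^n$ and $b=(b_1,\dots,b_n)\in\{0,1,\times\}^n$; positions $j$ with $b_j\ne\times$ are ''predicted''. A vector $d\in\mathbb{F}_2^n$ matches $b$ if $d_j=b_j$ for every predicted position $j$. Algorithm 2 (parameters: polynomial $q(n)$, constant $\sigma$; set $p(n)=\frac{1}{2\sigma^2}q(n)^2n^3$): 1. For each $j=1,\dots,n$: run BV on $F_j$ independently $p(n)$ times, obtaining $\omega\in\mathbb{F}_2^{n+m}$; let $H_j$ be the set of truncations $(\omega_1,\dots,\omega_n)$ of these outputs. For $i\in\{0,1\}$ let $A_j^i=\{x\in\mathbb{F}_2^n : x\cdot\omega=i\ \forall\omega\in H_j\}$ and $A_j=A_j^0\cup A_j^1$. 2. For $t=n,n-1,\dots,1$: if $2^t(1-\sigma)\le 1$, output ''No'' and stop. Otherwise,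 if there are distinct indices $j_1,\dots,j_t$ with $A_{j_1}\cap\dots\cap A_{j_t}\supsetneq\{\mathbf 0\}$, choose any nonzero $a$ in this intersection, set $b_j=i_j$ for $j\in\{j_1,\dots,j_t\}$, where $i_j$ is such that $a\in A_j^{i_j}$, and $b_j=\times$ otherwise; output $(a,b)$ and stop. If the loop ends, output ''No''. A probability is negligible in $n$ if it is bounded by a function of $n$ that is eventually smaller than $1/\mathrm{poly}(n)$ for every polynomial; probabilities are over the randomness of the BV measurements. *)

From HB Require Import structures.
From mathcomp Require Import all_boot all_order all_algebra.
Set Implicit Arguments. Unset Strict Implicit. Unset Printing Implicit Defensive.
Import Order.TTheory GRing.Theory Num.Theory.
Local Open Scope ring_scope.

Definition bv (n : nat) := {ffun 'I_n -> bool}.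
Definition zerov (n : nat) : bv n := [ffun => false].
Definition xorv (n : nat) (u w : bv n) : bv n := [ffun i => u i (+) w i].
Definition dotb (n : nat) (u w : bv n) : bool := \big[addb/false]_(i < n) (u i && w i).

(* z = (x, k) in F_2^(n+m): first n coordinates x, last m coordinates k. *)
Definition lpart (n m : nat) (z : bv (n + m)) : bv n := [ffun i => z (lshift m i)].
Definition rpart (n m : nat) (z : bv (n + m)) : bv m := [ffun i => z (rshift n i)].

Definition Fcomp (n m : nat) (F : bv n -> bv m -> bv n) (j : 'I_n) (z : bv (n + m)) : bool :=
  F (lpart z) (rpart z) j.

Definition walsh (R : numFieldType) (N : nat) (f : bv N -> bool) (w : bv N) : R :=
  (2%:R ^+ N)^-1 * \sum_(x : bv N) (-1) ^+ (f x (+) dotb w x).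

(* Outcomes of step 1 of Algorithm 2: for each j and each run r < p, a BV output. *)
Definition sample (n m p : nat) := {ffun 'I_n -> {ffun 'I_p -> bv (n + m)}}.

(* Probability of an outcome: runs are independent, each returns w w.p. S_{F_j}(w)^2 *)
Definition sample_prob (R : numFieldType) (n m p : nat) (F : bv n -> bv m -> bv n)
  (s : sample n m p) : R :=
  \prod_(j < n) \prod_(r < p) (walsh R (Fcomp F j) (s j r)) ^+ 2.

Definition Pr (R : numFieldType) (n m p : nat) (F : bv n -> bv m -> bv n)
  (E : pred (sample n m p)) : R :=
  \sum_(s : sample n m p | E s) sample_prob R F s.

(* A_j^i = {x : x.w = i for all w in H_j}, H_j = truncations of the outputs *)
Definition Aji (n m p : nat) (s : sample n m p) (j : 'I_n) (i : bool) : {set bv n} :=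
  [set x : bv n | [forall r : 'I_p, dotb (lpart (s j r)) x == i]].
Definition Aj (n m p : nat) (s : sample n m p) (j : 'I_n) : {set bv n} :=
  Aji s j false :|: Aji s j true.

Definition nontriv (n m p : nat) (s : sample n m p) (J : {set 'I_n}) : bool :=
  [set zerov n] \proper (\bigcap_(j in J) Aj s j).

(* truncated differential b in {0,1,x}^n : None stands for x *)
Definition tdiff (n : nat) := {ffun 'I_n -> option bool}.
Definition matches (n : nat) (b : tdiff n) (d : bv n) : bool :=
  [forall j, if b j is Some v then d j == v else true].

(* (a,b) is a possible output of step 2 of Algorithm 2 on the outcome s
   (any admissible choice of j_1..j_t and of a is allowed). *)
Definition alg2_output (R : numFieldType) (sigma : R) (n m p : nat)
  (s : sample n m p) (a : bv n) (b : tdiff n) : bool :=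
  [exists t : 'I_n.+1,
    [&& (0 < t)%N,
        [forall t' : 'I_n.+1, (t <= t')%N ==> (1 < 2%:R ^+ t' * (1 - sigma))],
        [forall J : {set 'I_n}, (t < #|J|)%N ==> ~~ nontriv s J] &
        [exists J : {set 'I_n},
          [&& #|J| == t, nontriv s J, a != zerov n,
              a \in \bigcap_(j in J) Aj s j &
              [forall j, if j \in J then
                           (if b j is Some i then a \in Aji s j i else false)
                         else b j == None]]]]].

Definition good_tdiff (R : numFieldType) (sigma qn : R) (n m : nat)
  (F : bv n -> bv m -> bv n) (a : bv n) (b : tdiff n) : bool :=
  [exists K' : {set bv m},
    (1 - qn^-1 < #|K'|%:R / #|{: bv m}|%:R) &&
    [forall k in K',
      1 - sigma < #|[set x : bv n | matches b (xorv (F (xorv x a) k) (F x k))]|%:R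
                  / 2%:R ^+ n]].

Definition nruns (R : archiRealFieldType) (q : {poly R}) (sigma : R) (n : nat) : nat :=
  `|Num.ceil (q.[n%:R] ^+ 2 * n%:R ^+ 3 / (2%:R * sigma ^+ 2))|%N.

Definition negligible (R : numFieldType) (eps : nat -> R) : Prop :=
  forall c : nat, exists N : nat, forall n : nat, (N <= n)%N -> eps n < (n%:R ^+ c)^-1.

(* By the Walsh-Parseval identities, a Bernstein-Vazirani run on F_j returns a
   [w] whose truncation satisfies [w . a <> i] with probability exactly the
   fraction of inputs (x, k) with [F_j(x + a, k) + F_j(x, k) <> i].  So if that
   fraction exceeds delta, all p runs agree with (a, i) with probability at most
   (1 - delta)^p, and a union bound over the n 2^n 2 triples (j, a, i) bounds the
   probability that Algorithm 2 predicts such a coordinate.  Otherwise every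
   predicted coordinate is wrong on at most a delta fraction of (x, k); when
   n delta <= sigma / (2 q(n)), Markov's inequality over the keys gives the key
   set K'.  With delta = sigma / (2 n q(n)) and p >= q(n)^2 n^3 / (2 sigma^2) we get
   (1 - delta)^p <= 2^-(n (c + 2) + 2), which beats n^-c for large n. *)

From HB Require Import structures.
From mathcomp Require Import all_boot all_order all_algebra.
From mathcomp Require Import ring lra zify polyrcf.
Import Order.TTheory GRing.Theory Num.Theory.
Set Implicit Arguments. Unset Strict Implicit. Unset Printing Implicit Defensive.
Local Open Scope ring_scope.

Section Walsh.
Variables (R : numFieldType) (N : nat).
Implicit Types (f : bv N -> bool) (w x y u v : bv N).

Lemma dotb_xorr w x y : dotb w (xorv x y) = dotb w x (+) dotb w y.
Proof.
rewrite /dotb -big_split /=; apply: eq_bigr => i _; rewrite ffunE.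
by case: (w i); case: (x i); case: (y i).
Qed.

Lemma dotb0 w : dotb w (zerov N) = false.
Proof. by rewrite /dotb big1 // => i _; rewrite ffunE andbF. Qed.

Lemma xorv0 x : xorv x (zerov N) = x.
Proof. by apply/ffunP => i; rewrite !ffunE addbF. Qed.

Lemma xorv_eq0 x y u : (xorv (xorv x y) u == zerov N) = (y == xorv x u).
Proof.
apply/eqP/eqP => [/ffunP xyu0|->]; apply/ffunP => i; last first.
  by rewrite !ffunE; case: (x i); case: (u i).
by move: (xyu0 i); rewrite !ffunE; case: (x i); case: (y i); case: (u i).
Qed.

Lemma sum1_bv : \sum_(x : bv N) (1 : R) = 2%:R ^+ N.
Proof. by rewrite sumr_const card_ffun card_bool card_ord natrX. Qed.

Lemma two_expn_gt0 k : 0 < 2%:R ^+ k :> R.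
Proof. by rewrite exprn_gt0 // ltr0n. Qed.

Lemma sign_dotb w v : (-1) ^+ dotb w v = \prod_(i < N) ((-1) ^+ (w i && v i) : R).
Proof.
apply: (big_morph (fun b : bool => (-1) ^+ b : R)) => [a b|]; last by rewrite expr0.
by rewrite signr_addb.
Qed.

Lemma sum_sign_dotb v :
  \sum_w ((-1) ^+ dotb w v : R) = if v == zerov N then 2%:R ^+ N else 0.
Proof.
under eq_bigr do rewrite sign_dotb.
rewrite -(bigA_distr_bigA (fun i b => ((-1) ^+ (b && v i) : R))) /=.
have sum_bool i : \sum_(b : bool) ((-1) ^+ (b && v i) : R) = if v i then 0 else 2%:R.
  rewrite /index_enum !unlock /= addr0.
  by case: (v i); rewrite /= ?expr0 ?expr1 ?addNr.
under eq_bigr do rewrite sum_bool.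
case: eqP => [->|/eqP v_neq0].
  by rewrite -[X in _ ^+ X]card_ord -prodr_const; apply: eq_bigr => i _; rewrite ffunE.
have [i vi] : exists i, v i.
  apply/existsP; apply: contraNT v_neq0; rewrite negb_exists => /forallP v0.
  by apply/eqP/ffunP => i; rewrite ffunE; move: (v0 i); case: (v i).
by rewrite (bigD1 i) //= vi mul0r.
Qed.

Lemma walsh_autocorr f u :
  \sum_w walsh R f w ^+ 2 * (-1) ^+ dotb w u =
  (2%:R ^+ N)^-1 * \sum_z ((-1) ^+ (f z (+) f (xorv z u)) : R).
Proof.
set c : R := (2%:R ^+ N)^-1.
have expand w : walsh R f w ^+ 2 * (-1) ^+ dotb w u =
   c ^+ 2 * \sum_x \sum_y ((-1) ^+ f x * (-1) ^+ f y : R) *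
        (-1) ^+ dotb w (xorv (xorv x y) u).
  rewrite /walsh -/c exprMn -mulrA; congr (_ * _).
  rewrite expr2 !big_distrl /=; apply: eq_bigr => x _.
  rewrite -mulrA mulrC !big_distrl /=; apply: eq_bigr => y _.
  rewrite !dotb_xorr !signr_addb; ring.
have character_sum x : \sum_y \sum_w ((-1) ^+ f x * (-1) ^+ f y : R) *
        (-1) ^+ dotb w (xorv (xorv x y) u) =
     2%:R ^+ N * (-1) ^+ (f x (+) f (xorv x u)).
  rewrite (eq_bigr (fun y => if y == xorv x u then
        (-1) ^+ f x * (-1) ^+ f y * 2%:R ^+ N else 0 : R)); last first.
    move=> y _; rewrite -big_distrr /= sum_sign_dotb xorv_eq0.
    by case: eqP; rewrite ?mulr0.
  by rewrite -big_mkcond big_pred1_eq signr_addb mulrC.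
under eq_bigr do rewrite expand.
rewrite -big_distrr /= exchange_big /=.
under eq_bigr do rewrite exchange_big /= character_sum.
rewrite -big_distrr /= mulrA; congr (_ * _).
by rewrite /c expr2 -mulrA mulVf ?mulr1 // gt_eqF ?two_expn_gt0.
Qed.

Lemma parseval f : \sum_w walsh R f w ^+ 2 = 1.
Proof.
have := walsh_autocorr f (zerov N).
under eq_bigr do rewrite dotb0 expr0 mulr1.
move=> ->; under eq_bigr do rewrite xorv0 addbb expr0.
by rewrite sum1_bv mulVf // gt_eqF ?two_expn_gt0.
Qed.

Lemma sum_neq_sign (T : finType) (g : T -> R) (h : T -> bool) (i : bool) :
  \sum_(t | h t != i) g t =
  (\sum_t g t - (-1) ^+ i * \sum_t g t * (-1) ^+ h t) / 2%:R.
Proof.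
rewrite big_mkcond mulr_sumr -sumrB mulr_suml; apply: eq_bigr => t _.
have two_neq0 : (2%:R : R) != 0 by rewrite pnatr_eq0.
by case: (h t); case: i; rewrite /= ?expr0 ?expr1; field.
Qed.

Lemma walsh_mass_dotb_neq f u (i : bool) :
  \sum_(w | dotb w u != i) walsh R f w ^+ 2 =
  (2%:R ^+ N)^-1 * \sum_(z | f z (+) f (xorv z u) != i) (1 : R).
Proof.
rewrite !sum_neq_sign parseval walsh_autocorr sum1_bv.
under [X in _ = _ * ((_ - _ * X) / _)]eq_bigr do rewrite mul1r.
rewrite mulrA mulrBr mulVf ?gt_eqF ?two_expn_gt0 //; ring.
Qed.

End Walsh.

Section SampleProbability.
Variables (R : realFieldType) (n m p : nat) (F : bv n -> bv m -> bv n).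

Lemma sample_prob_ge0 (s : sample n m p) : 0 <= sample_prob R F s.
Proof. by apply: prodr_ge0 => j _; apply: prodr_ge0 => r _; exact: sqr_ge0. Qed.

Lemma Pr_le_sum (T : finType) (P : pred T) (G : T -> pred (sample n m p))
    (E : pred (sample n m p)) :
  (forall s, E s -> exists2 t, P t & G t s) ->
  Pr R F E <= \sum_(t | P t) Pr R F (G t).
Proof.
move=> cover.
have term_ge0 s t : 0 <= sample_prob R F s * (G t s)%:R.
  by rewrite mulr_ge0 ?ler0n ?sample_prob_ge0.
apply: (@le_trans _ _ (\sum_s \sum_(t | P t) sample_prob R F s * (G t s)%:R)).
  rewrite [X in _ <= X](bigID E) /= -[X in X <= _]addr0.
  apply: lerD; last by apply: sumr_ge0 => s _; exact: sumr_ge0.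
  apply: ler_sum => s /cover [t Pt Gts].
  by rewrite (bigD1 t) //= Gts mulr1 lerDl sumr_ge0.
rewrite exchange_big /=; apply: ler_sum => t _.
rewrite [X in _ <= X]big_mkcond /=; apply: ler_sum => s _.
by case: (G t s); rewrite ?mulr1 ?mulr0.
Qed.

Lemma Pr_all_runs (j0 : 'I_n) (G : pred (bv (n + m))) :
  Pr R F (fun s : sample n m p => [forall r, G (s j0 r)]) =
  (\sum_(w | G w) walsh R (Fcomp F j0) w ^+ 2) ^+ p.
Proof.
pose h j w := if (j == j0) && ~~ G w then 0 else walsh R (Fcomp F j) w ^+ 2.
have product_form (s : sample n m p) :
    (if [forall r, G (s j0 r)] then sample_prob R F s else 0) =
    \prod_(j < n) \prod_(r < p) h j (s j r).
  case: ifP => [/forallP Gs|/negbT].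
    apply: eq_bigr => j _; apply: eq_bigr => r _.
    by rewrite /h; case: eqP => //= ->; rewrite Gs.
  rewrite negb_forall => /existsP [r Gr].
  by rewrite (bigD1 j0) //= (bigD1 r) //= {1}/h eqxx Gr !mul0r.
have sum_prod (g : 'I_n -> bv (n + m) -> R) :
    \sum_(s : sample n m p) \prod_(j < n) \prod_(r < p) g j (s j r) =
    \prod_(j < n) \prod_(r < p) \sum_w g j w.
  rewrite (eq_bigr (fun j => \sum_(t : {ffun 'I_p -> bv (n + m)}) \prod_(r < p) g j (t r)));
    last by move=> j _; rewrite bigA_distr_bigA.
  by rewrite bigA_distr_bigA.
rewrite /Pr big_mkcond /=; under eq_bigr do rewrite product_form.
rewrite sum_prod (bigD1 j0) //= [X in _ * X]big1 ?mulr1; last first.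
  move=> j /negbTE j_neq; rewrite (eq_bigr (fun _ => 1)) ?prodr_const ?expr1n // => r _.
  by rewrite /h j_neq parseval.
rewrite (eq_bigr (fun _ => \sum_(w | G w) walsh R (Fcomp F j0) w ^+ 2)).
  by rewrite prodr_const card_ord.
move=> r _; rewrite [RHS]big_mkcond; apply: eq_bigr => w _.
by rewrite /h eqxx; case: (G w).
Qed.

End SampleProbability.

Section DifferentialMass.
Variables (R : realFieldType) (n m : nat) (F : bv n -> bv m -> bv n).

Definition catv (x : bv n) (k : bv m) : bv (n + m) :=
  [ffun i => match split i with inl i' => x i' | inr i' => k i' end].

Definition padv (a : bv n) : bv (n + m) := catv a (zerov m).

Lemma split_lshift (i : 'I_n) : split (lshift m i) = inl i.
Proof. exact: (unsplitK (inl i)). Qed.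

Lemma split_rshift (i : 'I_m) : split (rshift n i) = inr i.
Proof. exact: (unsplitK (inr i)). Qed.

Lemma lpart_catv x k : lpart (catv x k) = x.
Proof. by apply/ffunP => i; rewrite !ffunE split_lshift. Qed.

Lemma rpart_catv x k : rpart (catv x k) = k.
Proof. by apply/ffunP => i; rewrite !ffunE split_rshift. Qed.

Lemma catv_part z : catv (lpart z) (rpart z) = z.
Proof.
apply/ffunP => i; rewrite ffunE -{2}(splitK i).
by case: (split i) => i' /=; rewrite ffunE.
Qed.

Lemma xorv_catv_padv x k a : xorv (catv x k) (padv a) = catv (xorv x a) k.
Proof.
by apply/ffunP => i; rewrite !ffunE; case: (split i) => i'; rewrite !ffunE ?addbF.
Qed.

Lemma dotb_padv w a : dotb w (padv a) = dotb (lpart w) a.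
Proof.
rewrite /dotb big_split_ord /= [X in _ (+) X]big1 ?addbF.
  by apply: eq_bigr => i _; rewrite !ffunE split_lshift.
by move=> i _; rewrite !ffunE split_rshift ffunE andbF.
Qed.

Lemma sum_catv (g : bv (n + m) -> R) :
  \sum_z g z = \sum_(x : bv n) \sum_(k : bv m) g (catv x k).
Proof.
rewrite pair_big /= (reindex (fun xk : bv n * bv m => catv xk.1 xk.2)) //.
exists (fun z => (lpart z, rpart z)) => [[x k] _|z _] /=.
  by rewrite lpart_catv rpart_catv.
exact: catv_part.
Qed.

Definition flip_mass (j : 'I_n) (a : bv n) (i : bool) : R :=
  \sum_(w | dotb (lpart w) a != i) walsh R (Fcomp F j) w ^+ 2.

Lemma flip_massE j a i : flip_mass j a i = (2%:R ^+ (n + m))^-1 *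
  \sum_(x : bv n) \sum_(k : bv m) ((F (xorv x a) k j (+) F x k j) != i)%:R.
Proof.
rewrite /flip_mass; under eq_bigl do rewrite -dotb_padv.
rewrite walsh_mass_dotb_neq; congr (_ * _).
rewrite big_mkcond sum_catv; apply: eq_bigr => x _; apply: eq_bigr => k _.
rewrite xorv_catv_padv /Fcomp !lpart_catv !rpart_catv addbC.
by case: (_ != _).
Qed.

End DifferentialMass.

Lemma card_ge_mul_le_sum (R : realDomainType) (T : finType) (g : T -> R) (t : R) :
  (forall k, 0 <= g k) -> #|[set k | t <= g k]|%:R * t <= \sum_k g k.
Proof.
move=> g_ge0; rewrite mulr_natl -sumr_const [X in _ <= X](bigID [in [set k | t <= g k]]) /=.
rewrite -[X in X <= _]addr0 lerD ?sumr_ge0 //.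
by apply: ler_sum => k; rewrite inE.
Qed.

Definition mispredicts (n : nat) (b : tdiff n) (d : bv n) (j : 'I_n) : bool :=
  if b j is Some v then d j != v else false.

Lemma not_matches_le_sum (R : realDomainType) (n : nat) (b : tdiff n) (d : bv n) :
  ((~~ matches b d)%:R : R) <= \sum_j (mispredicts b d j)%:R.
Proof.
have sum_ge0 : 0 <= \sum_j ((mispredicts b d j)%:R : R) by rewrite sumr_ge0.
case: (boolP (matches b d)) => //=; rewrite negb_forall => /existsP [j bj].
rewrite (bigD1 j) //= -[1%:R]addr0 lerD ?sumr_ge0 //.
by move: bj; rewrite /mispredicts; case: (b j) => // v; rewrite ler_nat => ->.
Qed.

Section GoodTruncatedDifferential.
Variables (R : realFieldType) (n m : nat) (F : bv n -> bv m -> bv n).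
Variables (sigma qn delta : R) (a : bv n) (b : tdiff n).
Hypotheses (sigma_gt0 : 0 < sigma) (qn_gt0 : 0 < qn) (delta_ge0 : 0 <= delta).
Hypothesis flip_mass_le : forall j i, b j = Some i -> flip_mass R F j a i <= delta.

Let diff k x := xorv (F (xorv x a) k) (F x k).
Let mismatches k : R := \sum_(x : bv n) (~~ matches b (diff k x))%:R.

Lemma sum_mismatches_le : \sum_k mismatches k <= n%:R * (2%:R ^+ (n + m) * delta).
Proof.
have component_le j :
    \sum_k \sum_x ((mispredicts b (diff k x) j)%:R : R) <= 2%:R ^+ (n + m) * delta.
  case bj: (b j) => [v|]; last first.
    rewrite big1 ?mulr_ge0 ?exprn_ge0 ?ler0n // => k _.
    by rewrite big1 // => x _; rewrite /mispredicts bj.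
  suff -> : \sum_k \sum_x ((mispredicts b (diff k x) j)%:R : R) =
            2%:R ^+ (n + m) * flip_mass R F j a v.
    by rewrite ler_pM2l ?two_expn_gt0 ?flip_mass_le.
  rewrite flip_massE mulrA mulfV ?gt_eqF ?two_expn_gt0 // mul1r exchange_big /=.
  by apply: eq_bigr => k _; apply: eq_bigr => x _; rewrite /mispredicts bj !ffunE addbC.
apply: (@le_trans _ _ (\sum_k \sum_x \sum_j ((mispredicts b (diff k x) j)%:R : R))).
  by apply: ler_sum => k _; apply: ler_sum => x _; exact: not_matches_le_sum.
under eq_bigr do rewrite exchange_big /=.
rewrite exchange_big /=; apply: (le_trans (ler_sum _ (fun j _ => component_le j))).
by rewrite sumr_const card_ord mulr_natl.
Qed.

Lemma good_tdiff_of_flip_mass_le :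
  n%:R * delta <= sigma / (2%:R * qn) -> good_tdiff sigma qn F a b.
Proof.
move=> n_delta_le.
pose Kbad := [set k | sigma * 2%:R ^+ n <= mismatches k].
have card_bv_m : #|{: bv m}| = (2 ^ m)%N by rewrite card_ffun card_bool card_ord.
have two_m_gt0 : (0 : R) < (2 ^ m)%:R by rewrite ltr0n expn_gt0.
have card_Kbad : #|Kbad|%:R / (2 ^ m)%:R <= qn^-1 / 2%:R :> R.
  rewrite ler_pdivrMr // -(ler_pM2r (_ : 0 < sigma * 2%:R ^+ n)); last first.
    by rewrite mulr_gt0 ?two_expn_gt0.
  apply: (le_trans (card_ge_mul_le_sum _ _)) => [k|]; first by rewrite sumr_ge0.
  apply: (le_trans sum_mismatches_le).
  have -> : qn^-1 / 2%:R * (2 ^ m)%:R * (sigma * 2%:R ^+ n) =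
            2%:R ^+ (n + m) * (sigma / (2%:R * qn)).
    by rewrite exprD natrX; field; rewrite gt_eqF.
  by rewrite mulrCA ler_pM2l ?two_expn_gt0.
apply/existsP; exists (~: Kbad); apply/andP; split.
  have -> : #|~: Kbad|%:R = (2 ^ m)%:R - #|Kbad|%:R :> R.
    by rewrite -card_bv_m -(cardsC Kbad) natrD; ring.
  rewrite card_bv_m mulrBl mulfV ?gt_eqF //.
  have : 0 < qn^-1 by rewrite invr_gt0.
  lra.
apply/forallP => k; apply/implyP; rewrite !inE -ltNge => k_good.
have -> : #|[set x | matches b (diff k x)]|%:R = 2%:R ^+ n - mismatches k.
  rewrite -(sum1_bv R) -sumrB -sum1dep_card natr_sum big_mkcond /=.
  by apply: eq_bigr => x _; case: (matches _ _); rewrite ?subr0 ?subrr.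
rewrite mulrBl mulfV ?gt_eqF ?two_expn_gt0 //.
have : mismatches k / 2%:R ^+ n < sigma by rewrite ltr_pdivrMr ?two_expn_gt0.
lra.
Qed.
End GoodTruncatedDifferential.

Section FailureProbability.
Variables (R : realFieldType) (n m p : nat) (F : bv n -> bv m -> bv n).

Definition agrees (s : sample n m p) (j : 'I_n) (a : bv n) (i : bool) : bool :=
  [forall r, dotb (lpart (s j r)) a == i].

Lemma Pr_agrees j a i :
  Pr R F (fun s => agrees s j a i) = (1 - flip_mass R F j a i) ^+ p.
Proof.
rewrite /agrees (@Pr_all_runs R n m p F j (fun w => dotb (lpart w) a == i)); congr (_ ^+ _).
rewrite -(parseval R (Fcomp F j)) [X in _ = X - _](bigID (fun w => dotb (lpart w) a == i)) /=.
by rewrite /flip_mass addrK.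
Qed.

Lemma flip_mass_le1 j a i : flip_mass R F j a i <= 1.
Proof.
rewrite -(parseval R (Fcomp F j)) [X in _ <= X](bigID (fun w => dotb (lpart w) a != i)).
by rewrite lerDl sumr_ge0 // => w _; exact: sqr_ge0.
Qed.

Lemma alg2_failure_agrees (sigma qn delta : R) (s : sample n m p) a b :
  0 < sigma -> 0 < qn -> 0 <= delta -> n%:R * delta <= sigma / (2%:R * qn) ->
  alg2_output sigma s a b -> ~~ good_tdiff sigma qn F a b ->
  exists j i, delta < flip_mass R F j a i /\ agrees s j a i.
Proof.
move=> sigma_gt0 qn_gt0 delta_ge0 n_delta_le out not_good.
have : [exists j, exists i, (b j == Some i) && (delta < flip_mass R F j a i)].
  apply: contraNT not_good; rewrite negb_exists => /forallP all_small.
  apply: good_tdiff_of_flip_mass_le n_delta_le => // j i bj.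
  by move: (all_small j); rewrite negb_exists => /forallP/(_ i); rewrite bj eqxx -leNgt.
case/existsP => j /existsP [i /andP [/eqP bj flip_gt]].
exists j, i; split => //.
move: out => /existsP [t /and4P [_ _ _ /existsP [J /and5P [_ _ _ _ /forallP bJ]]]].
by move: (bJ j); case: (j \in J); rewrite bj // inE.
Qed.

Lemma alg2_failure_le (sigma qn delta : R) :
  0 < sigma -> 0 < qn -> 0 <= delta -> delta <= 1 ->
  n%:R * delta <= sigma / (2%:R * qn) ->
  Pr R F (fun s : sample n m p =>
      [exists a : bv n, exists b : tdiff n,
         alg2_output sigma s a b && ~~ good_tdiff sigma qn F a b])
  <= (n * 2 ^ n * 2)%:R * (1 - delta) ^+ p.
Proof.
move=> sigma_gt0 qn_gt0 delta_ge0 delta_le1 n_delta_le.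
pose heavy (t : 'I_n * bv n * bool) := delta < flip_mass R F t.1.1 t.1.2 t.2.
apply: (le_trans (@Pr_le_sum R n m p F _ heavy (fun t s => agrees s t.1.1 t.1.2 t.2) _ _)).
  move=> s /existsP [a /existsP [b /andP [out not_good]]].
  have [j [i [flip_gt agr]]] :=
    alg2_failure_agrees sigma_gt0 qn_gt0 delta_ge0 n_delta_le out not_good.
  by exists (j, a, i).
have card_triples : #|{: 'I_n * bv n * bool}| = (n * 2 ^ n * 2)%N.
  by rewrite !card_prod card_ord card_ffun card_bool card_ord.
apply: (@le_trans _ _ (\sum_(t : 'I_n * bv n * bool) (1 - delta) ^+ p));
  last by rewrite sumr_const card_triples mulr_natl.
rewrite [X in _ <= X](bigID heavy) /= -[X in X <= _]addr0.
apply: lerD; last by apply: sumr_ge0 => t _; apply: exprn_ge0; rewrite subr_ge0.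
apply: ler_sum => [[[j a] i] heavy_t]; rewrite Pr_agrees.
by apply: lerXn2r; rewrite ?nnegrE ?subr_ge0 ?flip_mass_le1 // lerD2l lerN2 ltW.
Qed.

End FailureProbability.

Lemma bernoulli_ineq (R : realDomainType) (d : R) (k : nat) :
  0 <= d -> 1 + k%:R * d <= (1 + d) ^+ k.
Proof.
move=> d_ge0; elim: k => [|k IHk]; first by rewrite mul0r addr0 expr0.
have : 0 <= k%:R * d by rewrite mulr_ge0 ?ler0n.
rewrite exprS -natr1; nra.
Qed.

Lemma one_sub_expr_le_half (R : realFieldType) (d : R) (L : nat) :
  0 <= d -> d <= 1 -> 1 <= L%:R * d -> (1 - d) ^+ L <= 2%:R^-1.
Proof.
move=> d_ge0 d_le1 Ld_ge1.
have := bernoulli_ineq L d_ge0.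
have : (1 - d) ^+ L * (1 + d) ^+ L <= 1 by rewrite -exprMn exprn_ile1 //; nra.
have : 0 <= (1 - d) ^+ L by rewrite exprn_ge0 // subr_ge0.
rewrite -[2%:R^-1]mul1r ler_pdivlMr ?ltr0n //; nra.
Qed.

Lemma one_sub_expr_decay (R : realFieldType) (d : R) (p B : nat) :
  0 <= d -> d <= 1 -> 1 <= (p %/ B)%:R * d -> (1 - d) ^+ p <= ((2 ^ B)%:R)^-1.
Proof.
move=> d_ge0 d_le1 Ld_ge1.
have base_ge0 : 0 <= 1 - d by rewrite subr_ge0.
apply: (le_trans (ler_wiXn2l base_ge0 _ (leq_divM p B))); first by rewrite lerBlDr lerDl.
rewrite exprM natrX -exprVn lerXn2r ?nnegrE ?exprn_ge0 ?invr_ge0 ?ler0n //.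
exact: one_sub_expr_le_half.
Qed.

Lemma le_divn_natr (R : realFieldType) (x : R) (p B : nat) :
  (0 < B)%N -> B%:R * (x + 1) <= p%:R -> x <= (p %/ B)%:R.
Proof.
move=> B_gt0 p_ge.
have : (p%:R : R) < ((p %/ B).+1 * B)%:R by rewrite ltr_nat ltn_ceil.
have : (0 : R) < B%:R by rewrite ltr0n.
rewrite natrM -natr1; nra.
Qed.

Lemma le_natr_abs_ceil (R : archiRealFieldType) (x : R) : x <= `|Num.ceil x|%N%:R.
Proof.
rewrite natr_absz (le_trans (ceil_ge x)) // ler_int; exact: ler_norm.
Qed.

Lemma exists_natr_ge (R : archiRealFieldType) (x : R) :
  exists N, forall n, (N <= n)%N -> x <= n%:R.
Proof.
exists (Num.bound `|x|) => n n_ge.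
apply: (le_trans (ler_norm x)); apply/ltW/(lt_le_trans (archi_boundP (normr_ge0 x))).
by rewrite ler_nat.
Qed.

Lemma poly_exp_lt_exp2 (n c : nat) : (0 < n)%N ->
  (n * 2 ^ n * 2 * n ^ c < 2 ^ (n * (c + 2) + 2))%N.
Proof.
move=> n_gt0.
have n_le : (n ^ c.+1 <= (2 ^ n) ^ c.+1)%N by rewrite leq_exp2r // ltnW // ltn_expl.
have -> : (n * 2 ^ n * 2 * n ^ c = 2 * 2 ^ n * n ^ c.+1)%N.
  by rewrite expnS; move: (2 ^ n)%N (n ^ c)%N => y z; ring.
have -> : (2 ^ (n * (c + 2) + 2) = 2 * (2 * 2 ^ n * (2 ^ n) ^ c.+1))%N.
  have -> : (n * (c + 2) + 2 = n * c.+1 + n + 1 + 1)%N by ring.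
  by rewrite !expnD expnM expn1; move: (2 ^ n)%N ((2 ^ n) ^ c.+1)%N => y z; ring.
apply: (leq_ltn_trans (_ : _ <= 2 * 2 ^ n * (2 ^ n) ^ c.+1)%N).
  by rewrite leq_pmul2l // muln_gt0 expn_gt0.
by rewrite -[X in (X < _)%N]mul1n ltn_pmul2r // !muln_gt0 !expn_gt0.
Qed.

Definition mass_threshold (R : realFieldType) (n : nat) (Q sigma : R) : R :=
  sigma / (2%:R * n%:R * Q).

Section MassThreshold.
Variables (R : realFieldType) (n : nat) (Q sigma : R).
Hypotheses (sigma_gt0 : 0 < sigma) (sigma_lt1 : sigma < 1) (n_gt0 : (0 < n)%N).
Hypothesis Qn_ge1 : 1 <= Q * n%:R.

Let Q_gt0 : 0 < Q.
Proof. by rewrite -(@pmulr_lgt0 _ n%:R) ?ltr0n // (lt_le_trans ltr01 Qn_ge1). Qed.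

Lemma mass_threshold_gt0 : 0 < mass_threshold n Q sigma.
Proof. by rewrite divr_gt0 // !mulr_gt0 ?ltr0n. Qed.

Lemma mass_threshold_le1 : mass_threshold n Q sigma <= 1.
Proof.
rewrite ler_pdivrMr ?mulr_gt0 ?ltr0n // mul1r mulrAC -mulrA.
apply: le_trans (ltW sigma_lt1) (le_trans Qn_ge1 _).
by rewrite ler_peMl ?ler1n // (le_trans ler01).
Qed.

Lemma natr_mul_mass_threshold : n%:R * mass_threshold n Q sigma = sigma / (2%:R * Q).
Proof.
by rewrite /mass_threshold; field; rewrite pnatr_eq0 -lt0n n_gt0 gt_eqF.
Qed.

Lemma runs_ge_blocks (c p : nat) : (6 * (c + 4))%:R <= Q * n%:R ->
  Q ^+ 2 * n%:R ^+ 3 / (2%:R * sigma ^+ 2) <= p%:R ->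
  (n * (c + 2) + 2)%:R * ((mass_threshold n Q sigma)^-1 + 1) <= p%:R.
Proof.
move=> Qn_ge p_ge; apply: le_trans p_ge.
set t : R := n%:R; set K : R := (c + 4)%:R; set u := t * Q / sigma.
have K_ge0 : 0 <= K by rewrite ler0n.
have blocks_le : (n * (c + 2) + 2)%:R <= t * K.
  rewrite -natrM ler_nat (_ : (c + 4 = c + 2 + 2)%N); last by rewrite -addnA.
  by rewrite [X in (_ <= X)%N]mulnDr leq_add2l leq_pmull.
have u_ge : 6%:R * K <= u.
  have : 6%:R * K * sigma <= 6%:R * K by rewrite ler_piMr ?mulr_ge0 ?ler0n // ltW.
  have : 6%:R * K <= t * Q by rewrite /K -natrM mulrC.
  rewrite /u ler_pdivlMr //; lra.
have u_ge1 : 1 <= u.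
  by rewrite /u ler_pdivlMr // mul1r mulrC (le_trans (ltW sigma_lt1) Qn_ge1).
have -> : (mass_threshold n Q sigma)^-1 = 2%:R * u.
  by rewrite invf_div /u; field; rewrite gt_eqF.
have -> : Q ^+ 2 * t ^+ 3 / (2%:R * sigma ^+ 2) = t * u * u / 2%:R.
  by rewrite /u; field; rewrite gt_eqF.
have tK_ge0 : 0 <= t * K by rewrite mulr_ge0 ?ler0n.
apply: (le_trans (ler_wpM2r _ blocks_le)); first by lra.
have : 0 <= t * u * (u - 6%:R * K).
  by rewrite mulr_ge0 ?subr_ge0 // mulr_ge0 ?ler0n // (le_trans ler01 u_ge1).
have : 0 <= t * K * (u - 1) by rewrite mulr_ge0 // subr_ge0.
lra.
Qed.

Lemma failure_bound_lt (c p : nat) : (6 * (c + 4))%:R <= Q * n%:R ->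
  Q ^+ 2 * n%:R ^+ 3 / (2%:R * sigma ^+ 2) <= p%:R ->
  (n * 2 ^ n * 2)%:R * (1 - mass_threshold n Q sigma) ^+ p < (n%:R ^+ c)^-1.
Proof.
move=> Qn_ge p_ge; set d := mass_threshold n Q sigma; set B := (n * (c + 2) + 2)%N.
have d_gt0 := mass_threshold_gt0.
have : 1 <= (p %/ B)%:R * d.
  rewrite -[X in X <= _](mulVf (lt0r_neq0 d_gt0)) ler_pM2r //.
  by apply: le_divn_natr (runs_ge_blocks Qn_ge p_ge); rewrite addn_gt0 orbT.
move/(one_sub_expr_decay (ltW d_gt0) mass_threshold_le1) => decay.
apply: (le_lt_trans (ler_wpM2l (ler0n _ _) decay)).
rewrite ltr_pdivrMr ?ltr0n ?expn_gt0 // mulrC ltr_pdivlMr ?exprn_gt0 ?ltr0n //.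
by rewrite -natrX -!natrM ltr_nat poly_exp_lt_exp2.
Qed.

End MassThreshold.

Lemma eventually_pos_poly_ge (R : archiRealFieldType) (q : {poly R}) :
  (exists N, forall n, (N <= n)%N -> 0 < q.[n%:R]) ->
  exists2 c0, 0 < c0 & exists N, forall n, (N <= n)%N -> c0 <= q.[n%:R].
Proof.
case=> N q_pos.
have lc_gt0 : 0 < lead_coef q.
  case: (ltrgtP (lead_coef q) 0) => // [lc_lt0|/eqP]; last first.
    by rewrite lead_coef_eq0 => /eqP q0; move: (q_pos N (leqnn N)); rewrite q0 horner0 ltxx.
  have [y neg_q_ge] : exists y, forall x, y <= x -> lead_coef (- q) <= (- q).[x].
    by apply: poly_pinfty_gt_lc; rewrite lead_coefN oppr_gt0.
  have [M M_ge] := exists_natr_ge y.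
  have := q_pos _ (leq_maxl N M); have := neg_q_ge _ (M_ge _ (leq_maxr N M)).
  rewrite lead_coefN hornerN lerN2; lra.
exists (lead_coef q) => //.
have [y q_ge] := poly_pinfty_gt_lc lc_gt0; have [M M_ge] := exists_natr_ge y.
by exists M => n /M_ge /q_ge.
Qed.

Unset Implicit Arguments.

Theorem theorem3 (R : archiRealFieldType) (m : nat -> nat)
  (F : forall n : nat, bv n -> bv (m n) -> bv n)
  (q : {poly R}) (sigma : R) :
  (exists N : nat, forall n : nat, (N <= n)%N -> 0 < q.[n%:R]) ->
  0 < sigma -> sigma < 1 ->
  negligible (fun n : nat =>
    Pr R (F n) (fun s : sample n (m n) (nruns q sigma n) =>
      [exists a : bv n, exists b : tdiff n,
         alg2_output sigma s a b && ~~ good_tdiff sigma q.[n%:R] (F n) a b])).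
Proof.
move=> q_pos sigma_gt0 sigma_lt1 c.
have [c0 c0_gt0 [N0 q_ge]] := eventually_pos_poly_ge q_pos.
have [N1 n_ge] := exists_natr_ge ((6 * (c + 4))%:R / c0).
exists (maxn 1 (maxn N0 N1)) => n; rewrite !geq_max => /and3P [n_gt0 /q_ge Q_ge /n_ge].
rewrite ler_pdivrMr // => n_large.
set Q := q.[n%:R] in Q_ge *.
have Q_gt0 : 0 < Q by apply: lt_le_trans Q_ge.
have Qn_ge : (6 * (c + 4))%:R <= Q * n%:R.
  by apply: (le_trans n_large); rewrite mulrC ler_wpM2r ?ler0n.
have Qn_ge1 : 1 <= Q * n%:R by apply: le_trans _ Qn_ge; rewrite ler1n; lia.
have delta_gt0 := mass_threshold_gt0 sigma_gt0 n_gt0 Qn_ge1.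
apply: le_lt_trans (alg2_failure_le _ (F n) sigma_gt0 Q_gt0 (ltW delta_gt0) _ _)
                   (failure_bound_lt sigma_gt0 sigma_lt1 n_gt0 Qn_ge1 Qn_ge _).
- exact: mass_threshold_le1.
- by rewrite natr_mul_mass_threshold.
- exact: le_trans (le_natr_abs_ceil _).
Qed.
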